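(* Let $(X,d)$ be a bicomplete quasi-pseudometric space. Let $J:X\to X$ be a continuous single-valued map such that $r\,d(x,y)\le d(Jx,Jy)$ for all $x,y\in X$, for some constant $r>0$. Let $F:X\to CB(X)$ be a set-valued map such that $$H(Fx,Fy)\le \alpha\big[d(Jx,Fx)+d(Jy,Fy)\big]\quad\text{for all }x,y\in X,$$ where $\alpha\in(0,1/2)$. Then there exists a unique $x_0\in X$ which is both a startpoint and an endpoint of $J$ and $F$ if and only if $J$ and $F$ have the approximate mix-point property.
   Context: A quasi-pseudometric on a nonempty set $X$ is a map $d:X\times X\to[0,\infty)$ with $d(x,x)=0$ and $d(x,z)\le d(x,y)+d(y,z)$ for all $x,y,z$; it is $T_0$ if $d(x,y)=0=d(y,x)$ implies $x=y$. Write $d^s(x,y)=\max\{d(x,y),d(y,x)\}$. The space $(X,d)$ is bicomplete if $d$ is $T_0$ and the metric $d^s$ is complete. For $x\in X$ and nonempty $A\subseteq X$: $d(x,A)=\inf_{a\in A}d(x,a)$, $d(A,x)=\inf_{a\in A}d(a,x)$. For nonempty $A,B\subseteq X$: $H(A,B)=\max\{\sup_{a\in A}d(a,B),\ \sup_{b\in B}d(A,b)\}$. $CB(X)$ denotes the family of nonempty $d^s$-bounded, $\tau(d^s)$-closed subsets of $X$; continuity of $J$ is with respect to $\tau(d^s)$. For $J:X\to X$ and $F:X\to 2^X$, a point $x$ is a startpoint of $J$ and $F$ if $H(\{Jx\},Fx)=0$ and an endpoint of $J$ and $F$ if $H(Fx,\{Jx\})=0$. $J$ and $F$ have the approximate mix-point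 property if $\inf_{x\in X}\sup_{y\in Fx}d^s(Jx,y)=0$. *)

From Stdlib Require Import Reals Lra Classical ClassicalEpsilon.
Open Scope R_scope.

Section QPM.
Context {X : Type}.

Definition quasi_pseudometric (d : X -> X -> R) : Prop :=
  (forall x y, 0 <= d x y) /\ (forall x, d x x = 0) /\
  (forall x y z, d x z <= d x y + d y z).

Definition T0 (d : X -> X -> R) : Prop :=
  forall x y, d x y = 0 -> d y x = 0 -> x = y.

Definition ds (d : X -> X -> R) (x y : X) : R := Rmax (d x y) (d y x).

Definition ds_cauchy (d : X -> X -> R) (u : nat -> X) : Prop :=
  forall eps, eps > 0 -> exists N, forall m n, (m >= N)%nat -> (n >= N)%nat ->
    ds d (u m) (u n) < eps.

Definition ds_converges (d : X -> X -> R) (u : nat -> X) (l : X) : Prop :=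
  forall eps, eps > 0 -> exists N, forall n, (n >= N)%nat -> ds d (u n) l < eps.

Definition bicomplete (d : X -> X -> R) : Prop :=
  T0 d /\ forall u, ds_cauchy d u -> exists l, ds_converges d u l.

Definition ds_continuous (d : X -> X -> R) (J : X -> X) : Prop :=
  forall x eps, eps > 0 -> exists delta, delta > 0 /\
    forall y, ds d x y < delta -> ds d (J x) (J y) < eps.

Definition ds_bounded (d : X -> X -> R) (A : X -> Prop) : Prop :=
  exists M, forall a b, A a -> A b -> ds d a b <= M.

Definition ds_closed (d : X -> X -> R) (A : X -> Prop) : Prop :=
  forall x, (forall eps, eps > 0 -> exists a, A a /\ ds d x a < eps) -> A x.

Definition CB (d : X -> X -> R) (A : X -> Prop) : Prop :=
  (exists a, A a) /\ ds_bounded d A /\ ds_closed d A.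

End QPM.

(* infimum / supremum of a set of reals (value 0 if it does not exist) *)
Definition is_lower_bound (S : R -> Prop) (m : R) : Prop := forall x, S x -> m <= x.
Definition is_glb (S : R -> Prop) (m : R) : Prop :=
  is_lower_bound S m /\ forall b, is_lower_bound S b -> b <= m.

Definition Rinf (S : R -> Prop) : R :=
  match excluded_middle_informative (exists m, is_glb S m) with
  | left h => proj1_sig (constructive_indefinite_description _ h)
  | right _ => 0
  end.

Definition Rsup (S : R -> Prop) : R :=
  match excluded_middle_informative (exists m, is_lub S m) with
  | left h => proj1_sig (constructive_indefinite_description _ h)
  | right _ => 0
  end.

Section Haus.
Context {X : Type} (d : X -> X -> R).

Definition dpt_set (x : X) (A : X -> Prop) : R :=
  Rinf (fun r => exists a, A a /\ r = d x a).
Definition dset_pt (A : X -> Prop) (x : X) : R :=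
  Rinf (fun r => exists a, A a /\ r = d a x).

Definition H (A B : X -> Prop) : R :=
  Rmax (Rsup (fun r => exists a, A a /\ r = dpt_set a B))
       (Rsup (fun r => exists b, B b /\ r = dset_pt A b)).

Definition singleton (y : X) : X -> Prop := fun z => z = y.

Definition startpoint (J : X -> X) (F : X -> X -> Prop) (x : X) : Prop :=
  H (singleton (J x)) (F x) = 0.

Definition endpoint (J : X -> X) (F : X -> X -> Prop) (x : X) : Prop :=
  H (F x) (singleton (J x)) = 0.

Definition approx_mix_point (J : X -> X) (F : X -> X -> Prop) : Prop :=
  Rinf (fun r => exists x, r = Rsup (fun s => exists y, F x y /\ s = ds d (J x) y)) = 0.
End Haus.

(* Say that x is an eps-mix point when F x lies in the d^s-ball of radius eps about J x;
   a point is both a startpoint and an endpoint exactly when it is a 0-mix point, and the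
   approximate mix-point property says that eps-mix points exist for every eps > 0.
   The contraction condition with alpha < 1/2 bounds H(Fx, Fy) by (eps1 + eps2)/2 for an
   eps1-mix point x and an eps2-mix point y, hence d(Jx, Jy) <= 2 (eps1 + eps2) and, by the
   expansiveness of J, d(x, y) <= 2/r (eps1 + eps2).  This gives uniqueness of 0-mix points and
   makes any sequence of 1/(n+1)-mix points d^s-Cauchy; its limit z, with J x_n -> J z by
   continuity, is a 0-mix point because the Hausdorff estimates pass to the limit. *)

From Stdlib Require Import Reals Lra Classical ClassicalEpsilon.
Open Scope R_scope.

Lemma Rsup_is_lub (S : R -> Prop) :
  (exists x, S x) -> (exists M, forall x, S x -> x <= M) -> is_lub S (Rsup S).
Proof.
  intros Hne [M HM]. unfold Rsup.
  destruct (excluded_middle_informative _) as [h | h].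
  - exact (proj2_sig (constructive_indefinite_description _ h)).
  - exfalso. apply h. destruct (completeness S) as [m Hm]; [exists M; exact HM | exact Hne |].
    exists m. exact Hm.
Qed.

Lemma Rsup_upper_bound (S : R -> Prop) x :
  S x -> (exists M, forall y, S y -> y <= M) -> x <= Rsup S.
Proof. intros Hx HM. apply (Rsup_is_lub S (ex_intro _ x Hx) HM); exact Hx. Qed.

(* [0 <= c] covers the junk value [Rsup S = 0] when [S] has no supremum. *)
Lemma Rsup_le (S : R -> Prop) c : (forall x, S x -> x <= c) -> 0 <= c -> Rsup S <= c.
Proof.
  intros Hc H0. unfold Rsup.
  destruct (excluded_middle_informative _) as [h | h]; [|exact H0].
  apply (proj2_sig (constructive_indefinite_description _ h)). exact Hc.
Qed.

Lemma Rsup_nonneg (S : R -> Prop) x : S x -> 0 <= x -> 0 <= Rsup S.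
Proof.
  intros Hx H0. unfold Rsup.
  destruct (excluded_middle_informative _) as [h | h]; [|lra].
  apply Rle_trans with x; [exact H0|].
  apply (proj2_sig (constructive_indefinite_description _ h)). exact Hx.
Qed.

Lemma Rinf_is_glb (S : R -> Prop) :
  (exists x, S x) -> (exists m, is_lower_bound S m) -> is_glb S (Rinf S).
Proof.
  intros [x Hx] [m Hm]. unfold Rinf.
  destruct (excluded_middle_informative _) as [h | h].
  - exact (proj2_sig (constructive_indefinite_description _ h)).
  - exfalso. apply h.
    destruct (completeness (fun y => S (- y))) as [L [HL1 HL2]].
    + exists (- m). intros y Hy. specialize (Hm _ Hy). lra.
    + exists (- x). rewrite Ropp_involutive. exact Hx.
    + exists (- L). split.
      * intros z Hz. assert (- z <= L) by (apply HL1; rewrite Ropp_involutive; exact Hz). lra.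
      * intros b Hb. assert (L <= - b) by (apply HL2; intros y Hy; specialize (Hb _ Hy); lra). lra.
Qed.

Lemma Rinf_le (S : R -> Prop) x : S x -> (exists m, is_lower_bound S m) -> Rinf S <= x.
Proof. intros Hx Hm. apply (Rinf_is_glb S (ex_intro _ x Hx) Hm); exact Hx. Qed.

Lemma Rinf_approx (S : R -> Prop) eps :
  (exists x, S x) -> (exists m, is_lower_bound S m) -> 0 < eps ->
  exists x, S x /\ x < Rinf S + eps.
Proof.
  intros Hne Hm Heps. destruct (Rinf_is_glb S Hne Hm) as [_ Hgreatest].
  apply NNPP. intros Hnone.
  assert (Rinf S + eps <= Rinf S); [|lra].
  apply Hgreatest. intros x Hx. apply Rnot_lt_le. intros Hlt. apply Hnone. eauto.
Qed.

Lemma Rinf_nonneg (S : R -> Prop) x : S x -> (forall y, S y -> 0 <= y) -> 0 <= Rinf S.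
Proof.
  intros Hx H0. apply (Rinf_is_glb S (ex_intro _ x Hx)); [exists 0; exact H0 | exact H0].
Qed.

Lemma Rinf_eq0_iff (S : R -> Prop) :
  (exists x, S x) -> (forall x, S x -> 0 <= x) ->
  Rinf S = 0 <-> forall eps, 0 < eps -> exists x, S x /\ x < eps.
Proof.
  intros [x Hx] H0. assert (Hlb : exists m, is_lower_bound S m) by (exists 0; exact H0).
  split.
  - intros Hinf eps Heps. rewrite <- (Rplus_0_l eps), <- Hinf.
    apply Rinf_approx; eauto.
  - intros Hsmall. apply Rle_antisym; [|exact (Rinf_nonneg S x Hx H0)].
    apply Rle_plus_epsilon. intros eps Heps.
    destruct (Hsmall eps Heps) as [y [Hy Hlt]].
    pose proof (Rinf_le S y Hy Hlb). lra.
Qed.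

Section QuasiPseudometric.
Variables (X : Type) (d : X -> X -> R).

Lemma ds_ge_l x y : d x y <= ds d x y.
Proof. apply Rmax_l. Qed.

Lemma ds_ge_r x y : d y x <= ds d x y.
Proof. apply Rmax_r. Qed.

Lemma ds_sym x y : ds d x y = ds d y x.
Proof. apply Rmax_comm. Qed.

Lemma ds_le x y c : d x y <= c -> d y x <= c -> ds d x y <= c.
Proof. apply Rmax_lub. Qed.

Hypothesis Hq : quasi_pseudometric d.

Lemma d_nonneg x y : 0 <= d x y.
Proof. apply Hq. Qed.

Lemma d_triangle x y z : d x z <= d x y + d y z.
Proof. apply Hq. Qed.

Lemma ds_nonneg x y : 0 <= ds d x y.
Proof. pose proof (d_nonneg x y). pose proof (ds_ge_l x y). lra. Qed.

Lemma ds_triangle x y z : ds d x z <= ds d x y + ds d y z.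
Proof.
  pose proof (ds_ge_l x y); pose proof (ds_ge_l y z).
  pose proof (ds_ge_r x y); pose proof (ds_ge_r y z).
  pose proof (d_triangle x y z); pose proof (d_triangle z y x).
  apply ds_le; lra.
Qed.

Lemma singleton_bounded p : ds_bounded d (singleton p).
Proof.
  exists 0. intros a b -> ->. unfold ds. rewrite (proj1 (proj2 Hq)). rewrite Rmax_left; lra.
Qed.

Lemma dpt_set_le x A a : A a -> dpt_set d x A <= d x a.
Proof.
  intros Ha. apply Rinf_le; [eauto|]. exists 0. intros r [b [_ ->]]. apply d_nonneg.
Qed.

Lemma dset_pt_le x A a : A a -> dset_pt d A x <= d a x.
Proof.
  intros Ha. apply Rinf_le; [eauto|]. exists 0. intros r [b [_ ->]]. apply d_nonneg.
Qed.

Lemma dpt_set_nonneg x A : (exists a, A a) -> 0 <= dpt_set d x A.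
Proof.
  intros [a Ha]. apply (Rinf_nonneg _ (d x a)); [eauto|]. intros r [b [_ ->]]. apply d_nonneg.
Qed.

Lemma dpt_set_approx x A eps : (exists a, A a) -> 0 < eps ->
  exists a, A a /\ d x a < dpt_set d x A + eps.
Proof.
  intros [a Ha] Heps.
  destruct (Rinf_approx (fun r => exists a, A a /\ r = d x a) eps) as [r [[b [Hb ->]] Hr]];
    eauto.
  exists 0. intros r [b [_ ->]]. apply d_nonneg.
Qed.

Lemma dset_pt_approx x A eps : (exists a, A a) -> 0 < eps ->
  exists a, A a /\ d a x < dset_pt d A x + eps.
Proof.
  intros [a Ha] Heps.
  destruct (Rinf_approx (fun r => exists a, A a /\ r = d a x) eps) as [r [[b [Hb ->]] Hr]];
    eauto.
  exists 0. intros r [b [_ ->]]. apply d_nonneg.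
Qed.

Lemma dpt_set_le_H A B a : ds_bounded d A -> (exists b, B b) -> A a ->
  dpt_set d a B <= H d A B.
Proof.
  intros [M HM] [b0 Hb0] Ha. eapply Rle_trans; [|apply Rmax_l].
  apply Rsup_upper_bound; [eauto|]. exists (M + d a b0). intros r [a' [Ha' ->]].
  pose proof (dpt_set_le a' B b0 Hb0). pose proof (d_triangle a' a b0).
  pose proof (HM a' a Ha' Ha). pose proof (ds_ge_l a' a). lra.
Qed.

Lemma dset_pt_le_H A B b : (exists a, A a) -> ds_bounded d B -> B b ->
  dset_pt d A b <= H d A B.
Proof.
  intros [a0 Ha0] [M HM] Hb. eapply Rle_trans; [|apply Rmax_r].
  apply Rsup_upper_bound; [eauto|]. exists (d a0 b + M). intros r [b' [Hb' ->]].
  pose proof (dset_pt_le b' A a0 Ha0). pose proof (d_triangle a0 b b').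
  pose proof (HM b b' Hb Hb'). pose proof (ds_ge_l b b'). lra.
Qed.

Lemma H_approx_l A B a eps : ds_bounded d A -> (exists b, B b) -> A a -> 0 < eps ->
  exists b, B b /\ d a b < H d A B + eps.
Proof.
  intros HA HB Ha Heps. destruct (dpt_set_approx a B eps HB Heps) as [b [Hb Hlt]].
  pose proof (dpt_set_le_H A B a HA HB Ha). exists b. split; [exact Hb | lra].
Qed.

Lemma H_approx_r A B b eps : (exists a, A a) -> ds_bounded d B -> B b -> 0 < eps ->
  exists a, A a /\ d a b < H d A B + eps.
Proof.
  intros HA HB Hb Heps. destruct (dset_pt_approx b A eps HA Heps) as [a [Ha Hlt]].
  pose proof (dset_pt_le_H A B b HA HB Hb). exists a. split; [exact Ha | lra].
Qed.

Lemma H_le A B c :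
  (forall a, A a -> dpt_set d a B <= c) -> (forall b, B b -> dset_pt d A b <= c) -> 0 <= c ->
  H d A B <= c.
Proof.
  intros HA HB H0. apply Rmax_lub; apply Rsup_le; auto.
  - intros r [a [Ha ->]]. auto.
  - intros r [b [Hb ->]]. auto.
Qed.

Lemma H_singleton_l_eq0_iff p A : (exists a, A a) -> ds_bounded d A ->
  H d (singleton p) A = 0 <-> forall a, A a -> d p a <= 0.
Proof.
  intros [a0 Ha0] HA. split.
  - intros H0 a Ha. apply Rle_plus_epsilon. intros eps Heps.
    destruct (H_approx_r (singleton p) A a eps (ex_intro _ p eq_refl) HA Ha Heps)
      as [q [-> Hlt]].
    lra.
  - intros Hp. apply Rle_antisym.
    + apply H_le; [| |lra].
      * intros q ->. pose proof (dpt_set_le p A a0 Ha0). pose proof (Hp a0 Ha0). lra.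
      * intros b Hb. pose proof (dset_pt_le b (singleton p) p eq_refl). pose proof (Hp b Hb). lra.
    + eapply Rle_trans; [apply (dpt_set_nonneg p A); eauto|].
      apply dpt_set_le_H; [apply singleton_bounded | eauto | reflexivity].
Qed.

Lemma H_singleton_r_eq0_iff p A : (exists a, A a) -> ds_bounded d A ->
  H d A (singleton p) = 0 <-> forall a, A a -> d a p <= 0.
Proof.
  intros [a0 Ha0] HA. split.
  - intros H0 a Ha. apply Rle_plus_epsilon. intros eps Heps.
    destruct (H_approx_l A (singleton p) a eps HA (ex_intro _ p eq_refl) Ha Heps)
      as [q [-> Hlt]].
    lra.
  - intros Hp. apply Rle_antisym.
    + apply H_le; [| |lra].
      * intros a Ha. pose proof (dpt_set_le a (singleton p) p eq_refl). pose proof (Hp a Ha). lra.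
      * intros q ->. pose proof (dset_pt_le p A a0 Ha0). pose proof (Hp a0 Ha0). lra.
    + eapply Rle_trans; [apply (dpt_set_nonneg a0 (singleton p)); exists p; reflexivity|].
      apply dpt_set_le_H; [exact HA | exists p; reflexivity | exact Ha0].
Qed.

End QuasiPseudometric.

Lemma inv_succ_pos n : 0 < / (INR n + 1).
Proof. apply Rinv_0_lt_compat. pose proof (pos_INR n). lra. Qed.

Lemma inv_succ_eventually_lt eps : 0 < eps ->
  exists N, forall n, (n >= N)%nat -> / (INR n + 1) < eps.
Proof.
  intros Heps. destruct (archimed_cor1 eps Heps) as [N [HN HN0]]. exists N. intros n Hn.
  apply Rle_lt_trans with (/ INR N); [|exact HN].
  apply Rinv_le_contravar; [apply lt_0_INR; exact HN0|].
  pose proof (le_INR _ _ Hn). lra.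
Qed.

Lemma ds_cauchy_of_le {X} (d : X -> X -> R) (u : nat -> X) K : 0 < K ->
  (forall n m, ds d (u n) (u m) <= K * (/ (INR n + 1) + / (INR m + 1))) -> ds_cauchy d u.
Proof.
  intros HK Hu eps Heps.
  destruct (inv_succ_eventually_lt (eps / (2 * K))) as [N HN].
  { apply Rdiv_lt_0_compat; lra. }
  exists N. intros m n Hm Hn. eapply Rle_lt_trans; [apply Hu|].
  replace eps with (K * (eps / (2 * K) + eps / (2 * K))) by (field; lra).
  apply Rmult_lt_compat_l; [exact HK|].
  pose proof (HN m Hm). pose proof (HN n Hn). lra.
Qed.

Section MixPoints.
Variables (X : Type) (d : X -> X -> R) (J : X -> X) (F : X -> X -> Prop).
Hypothesis Hq : quasi_pseudometric d.
Hypothesis HF : forall x, CB d (F x).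

Definition mix_within (eps : R) (x : X) : Prop := forall y, F x y -> ds d (J x) y <= eps.

Definition mix_radius (x : X) : R := Rsup (fun s => exists y, F x y /\ s = ds d (J x) y).

Lemma F_nonempty x : exists y, F x y.
Proof. apply HF. Qed.

Lemma F_bounded x : ds_bounded d (F x).
Proof. apply HF. Qed.

Lemma mix_within_weaken e1 e2 x : e1 <= e2 -> mix_within e1 x -> mix_within e2 x.
Proof. intros Hle Hx y Hy. specialize (Hx y Hy). lra. Qed.

Lemma mix_within_nonneg eps x : mix_within eps x -> 0 <= eps.
Proof.
  intros Hx. destruct (F_nonempty x) as [y Hy].
  pose proof (ds_nonneg X d Hq (J x) y). pose proof (Hx y Hy). lra.
Qed.

Lemma mix_within_radius x : mix_within (mix_radius x) x.
Proof.
  intros y Hy. apply Rsup_upper_bound; [eauto|].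
  destruct (F_nonempty x) as [a Ha]. destruct (F_bounded x) as [M HM].
  exists (ds d (J x) a + M). intros s [y' [Hy' ->]].
  pose proof (ds_triangle X d Hq (J x) a y'). pose proof (HM a y' Ha Hy'). lra.
Qed.

Lemma mix_radius_le eps x : 0 <= eps -> mix_within eps x -> mix_radius x <= eps.
Proof. intros H0 Hx. apply Rsup_le; [|exact H0]. intros s [y [Hy ->]]. auto. Qed.

Lemma mix_radius_nonneg x : 0 <= mix_radius x.
Proof.
  destruct (F_nonempty x) as [y Hy].
  apply (Rsup_nonneg _ (ds d (J x) y)); [eauto | apply (ds_nonneg X d Hq)].
Qed.

Lemma approx_mix_point_iff : inhabited X ->
  approx_mix_point d J F <-> forall eps, 0 < eps -> exists x, mix_within eps x.
Proof.
  intros [x0].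
  change (Rinf (fun t => exists x, t = mix_radius x) = 0
          <-> forall eps, 0 < eps -> exists x, mix_within eps x).
  rewrite Rinf_eq0_iff.
  - split.
    + intros Hsmall eps Heps. destruct (Hsmall eps Heps) as [t [[x ->] Hlt]].
      exists x. apply (mix_within_weaken (mix_radius x)); [lra | apply mix_within_radius].
    + intros Happrox eps Heps. destruct (Happrox (eps / 2)) as [x Hx]; [lra|].
      exists (mix_radius x). split; [exists x; reflexivity|].
      pose proof (mix_radius_le (eps / 2) x ltac:(lra) Hx). lra.
  - exists (mix_radius x0), x0. reflexivity.
  - intros t [x ->]. apply mix_radius_nonneg.
Qed.

Lemma startpoint_endpoint_iff x :
  startpoint d J F x /\ endpoint d J F x <-> mix_within 0 x.
Proof.
  unfold startpoint, endpoint.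
  rewrite (H_singleton_l_eq0_iff X d Hq), (H_singleton_r_eq0_iff X d Hq);
    [| apply F_nonempty | apply F_bounded | apply F_nonempty | apply F_bounded].
  split.
  - intros [Hs He] y Hy. apply ds_le; auto.
  - intros Hx. split; intros y Hy; specialize (Hx y Hy).
    + pose proof (ds_ge_l X d (J x) y). lra.
    + pose proof (ds_ge_r X d (J x) y). lra.
Qed.

Lemma dpt_set_J_le eps x : mix_within eps x -> dpt_set d (J x) (F x) <= eps.
Proof.
  intros Hx. destruct (F_nonempty x) as [y Hy].
  pose proof (dpt_set_le X d Hq (J x) (F x) y Hy).
  pose proof (ds_ge_l X d (J x) y). pose proof (Hx y Hy). lra.
Qed.

Variable alpha : R.
Hypothesis Halpha : 0 < alpha < 1/2.
Hypothesis HH : forall x y,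
  H d (F x) (F y) <= alpha * (dpt_set d (J x) (F x) + dpt_set d (J y) (F y)).

Lemma H_F_le_half x y :
  H d (F x) (F y) <= (dpt_set d (J x) (F x) + dpt_set d (J y) (F y)) / 2.
Proof.
  pose proof (dpt_set_nonneg X d Hq (J x) (F x) (F_nonempty x)).
  pose proof (dpt_set_nonneg X d Hq (J y) (F y) (F_nonempty y)).
  pose proof (HH x y).
  assert (alpha * (dpt_set d (J x) (F x) + dpt_set d (J y) (F y))
          <= / 2 * (dpt_set d (J x) (F x) + dpt_set d (J y) (F y)))
    by (apply Rmult_le_compat_r; lra).
  lra.
Qed.

Lemma H_F_le_mix_within e1 e2 x y : mix_within e1 x -> mix_within e2 y ->
  H d (F x) (F y) <= (e1 + e2) / 2.
Proof.
  intros Hx Hy. pose proof (H_F_le_half x y).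
  pose proof (dpt_set_J_le e1 x Hx). pose proof (dpt_set_J_le e2 y Hy). lra.
Qed.

Lemma dJ_le_mix_within e1 e2 x y : mix_within e1 x -> mix_within e2 y ->
  d (J x) (J y) <= 2 * (e1 + e2).
Proof.
  intros Hx Hy. apply Rle_plus_epsilon. intros eps Heps.
  destruct (F_nonempty x) as [a Ha].
  destruct (H_approx_l X d Hq (F x) (F y) a eps (F_bounded x) (F_nonempty y) Ha Heps)
    as [w [Hw Haw]].
  pose proof (H_F_le_mix_within e1 e2 x y Hx Hy).
  pose proof (ds_ge_l X d (J x) a). pose proof (Hx a Ha).
  pose proof (ds_ge_r X d (J y) w). pose proof (Hy w Hw).
  pose proof (d_triangle X d Hq (J x) a (J y)). pose proof (d_triangle X d Hq a w (J y)).
  pose proof (mix_within_nonneg e1 x Hx). pose proof (mix_within_nonneg e2 y Hy).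
  lra.
Qed.

(* The three estimates go through [J x] for an [x] that is an [eps]-approximate mix point
   with [J x] close to [J z]; the distance [d(Jz, Fz)] must be shown to vanish first. *)
Lemma mix_within_0_of_approx z :
  (forall eps, 0 < eps -> exists x, mix_within eps x /\ ds d (J x) (J z) <= eps) ->
  mix_within 0 z.
Proof.
  intros Happrox.
  assert (HD : dpt_set d (J z) (F z) <= 0).
  { apply Rle_plus_epsilon. intros eps Heps.
    destruct (Happrox (eps / 8)) as [x [Hx HJxz]]; [lra|].
    destruct (F_nonempty x) as [y Hy].
    destruct (H_approx_l X d Hq (F x) (F z) y (eps / 8) (F_bounded x) (F_nonempty z) Hy)
      as [w [Hw Hyw]]; [lra|].
    pose proof (H_F_le_half x z). pose proof (dpt_set_J_le _ x Hx).
    pose proof (dpt_set_le X d Hq (J z) (F z) w Hw).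
    pose proof (ds_ge_r X d (J x) (J z)). pose proof (ds_ge_l X d (J x) y). pose proof (Hx y Hy).
    pose proof (d_triangle X d Hq (J z) (J x) w). pose proof (d_triangle X d Hq (J x) y w).
    lra. }
  assert (HHz : forall eps x, mix_within eps x -> H d (F x) (F z) <= eps / 2 /\ H d (F z) (F x) <= eps / 2).
  { intros eps x Hx. pose proof (H_F_le_half x z). pose proof (H_F_le_half z x).
    pose proof (dpt_set_J_le _ x Hx). lra. }
  intros y Hy. apply ds_le.
  - apply Rle_plus_epsilon. intros eps Heps.
    destruct (Happrox (eps / 4)) as [x [Hx HJxz]]; [lra|].
    destruct (H_approx_r X d Hq (F x) (F z) y (eps / 4) (F_nonempty x) (F_bounded z) Hy)
      as [w [Hw Hwy]]; [lra|].
    destruct (HHz _ x Hx).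
    pose proof (ds_ge_r X d (J x) (J z)). pose proof (ds_ge_l X d (J x) w). pose proof (Hx w Hw).
    pose proof (d_triangle X d Hq (J z) (J x) y). pose proof (d_triangle X d Hq (J x) w y).
    lra.
  - apply Rle_plus_epsilon. intros eps Heps.
    destruct (Happrox (eps / 4)) as [x [Hx HJxz]]; [lra|].
    destruct (H_approx_l X d Hq (F z) (F x) y (eps / 4) (F_bounded z) (F_nonempty x) Hy)
      as [w [Hw Hyw]]; [lra|].
    destruct (HHz _ x Hx).
    pose proof (ds_ge_l X d (J x) (J z)). pose proof (ds_ge_r X d (J x) w). pose proof (Hx w Hw).
    pose proof (d_triangle X d Hq y (J x) (J z)). pose proof (d_triangle X d Hq y w (J x)).
    lra.
Qed.


Variable r : R.
Hypothesis Hr : r > 0.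
Hypothesis HJ : forall x y, r * d x y <= d (J x) (J y).

Lemma d_le_mix_within e1 e2 x y : mix_within e1 x -> mix_within e2 y ->
  d x y <= 2 / r * (e1 + e2).
Proof.
  intros Hx Hy. apply Rmult_le_reg_l with r; [exact Hr|].
  replace (r * (2 / r * (e1 + e2))) with (2 * (e1 + e2)) by (field; lra).
  eapply Rle_trans; [apply HJ | apply dJ_le_mix_within; assumption].
Qed.

Lemma mix_within_0_unique x y : T0 d -> mix_within 0 x -> mix_within 0 y -> x = y.
Proof.
  intros HT0 Hx Hy.
  pose proof (d_le_mix_within 0 0 x y Hx Hy). pose proof (d_le_mix_within 0 0 y x Hy Hx).
  pose proof (d_nonneg X d Hq x y). pose proof (d_nonneg X d Hq y x).
  apply HT0; lra.
Qed.

Lemma mix_within_0_exists :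
  (forall u, ds_cauchy d u -> exists l, ds_converges d u l) -> ds_continuous d J ->
  (forall eps, 0 < eps -> exists x, mix_within eps x) -> exists z, mix_within 0 z.
Proof.
  intros Hcomplete HJc Happrox.
  destruct (choice (fun n x => mix_within (/ (INR n + 1)) x)) as [u Hu].
  { intros n. apply Happrox, inv_succ_pos. }
  destruct (Hcomplete u) as [z Hz].
  { apply (ds_cauchy_of_le d u (2 / r)); [apply Rdiv_lt_0_compat; lra|].
    intros n m. apply ds_le; [|rewrite (Rplus_comm (/ (INR n + 1)))];
      apply d_le_mix_within; apply Hu. }
  exists z. apply mix_within_0_of_approx. intros eps Heps.
  destruct (inv_succ_eventually_lt eps Heps) as [N1 HN1].
  destruct (HJc z eps Heps) as [delta [Hdelta Hcont]].
  destruct (Hz delta Hdelta) as [N2 HN2].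
  exists (u (Nat.max N1 N2)). split.
  - apply (mix_within_weaken (/ (INR (Nat.max N1 N2) + 1))); [|apply Hu].
    apply Rlt_le, HN1, Nat.le_max_l.
  - rewrite ds_sym. apply Rlt_le, Hcont. rewrite ds_sym. apply HN2, Nat.le_max_r.
Qed.

End MixPoints.

Theorem mainTheorem6 (X : Type) (d : X -> X -> R)
  (J : X -> X) (F : X -> X -> Prop) (r alpha : R) :
  inhabited X ->
  quasi_pseudometric d ->
  bicomplete d ->
  ds_continuous d J ->
  r > 0 ->
  (forall x y, r * d x y <= d (J x) (J y)) ->
  (forall x, CB d (F x)) ->
  0 < alpha < 1/2 ->
  (forall x y, H d (F x) (F y) <=
               alpha * (dpt_set d (J x) (F x) + dpt_set d (J y) (F y))) ->
  ((exists! x0, startpoint d J F x0 /\ endpoint d J F x0) <->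
   approx_mix_point d J F).
Proof.
  intros Hinh Hq [HT0 Hcomplete] HJc Hr HJ HF Halpha HH.
  rewrite (approx_mix_point_iff X d J F Hq HF Hinh).
  split.
  - intros [x [Hx _]] eps Heps. exists x.
    apply (mix_within_weaken X d J F 0); [lra|].
    apply (startpoint_endpoint_iff X d J F Hq HF), Hx.
  - intros Happrox.
    destruct (mix_within_0_exists X d J F Hq HF alpha Halpha HH r Hr HJ Hcomplete HJc Happrox)
      as [z Hz].
    exists z. split; [apply (startpoint_endpoint_iff X d J F Hq HF), Hz|].
    intros x Hx.
    apply (mix_within_0_unique X d J F Hq HF alpha Halpha HH r Hr HJ z x HT0 Hz).
    apply (startpoint_endpoint_iff X d J F Hq HF), Hx.
Qed.
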